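(* Let $q\in\mathbb{C}\setminus\{0\}$, let $n\ge 1$ be an integer, and let $P,f\in\mathbb{C}[x^{-1}][[x]]$ with $P\neq 0$ satisfy $$x\,\sigma_q f+f=P .$$ Then $$L_{n,n}^P\,(f^n)=(-1)^{n(n-1)/2},$$ where $$L_{n,n}^P=\frac{1}{P_n}\left(x\sigma_q+1\right)\frac{1}{P_{n-1}}\left(x^2\sigma_q-1\right)\cdots\frac{1}{P_1}\left(x^n\sigma_q-(-1)^n\right),$$ i.e. $L_{n,n}^P=\frac{1}{P_n}\left(x^{1}\sigma_q-(-1)^{1}\right)\frac{1}{P_{n-1}}\left(x^{2}\sigma_q-(-1)^{2}\right)\cdots\frac{1}{P_1}\left(x^{n}\sigma_q-(-1)^{n}\right)$.
   Context: $\mathbb{C}[x^{-1}][[x]]$ is the field of formal Laurent series in $x$ with finitely many negative powers. $\sigma_q$ is the automorphism $\sigma_q f(x)=f(qx)$ of this field; $\sigma_q^k=\sigma_{q^k}$. Elements of the field act as multiplication operators, and products of operators denote composition. Define the sequence $P_0=0$, $P_1=P$, and $P_m=\sum_{k=0}^{m-1}(-x\sigma_q)^kP$ for $m\ge 2$ (so $(-x\sigma_q)^kP=(-x)^kq^{k(k-1)/2}\sigma_q^kP$). These $P_m$ ($m\ge1$) are nonzero, so the operator above is well defined. *)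

From HB Require Import structures.
From mathcomp Require Import all_boot all_order all_algebra complex.
From mathcomp Require Import Rstruct.
From Stdlib Require Import ClassicalEpsilon.
Set Implicit Arguments. Unset Strict Implicit. Unset Printing Implicit Defensive.
Import Order.TTheory GRing.Theory Num.Theory.
Local Open Scope ring_scope.

Definition C : numClosedFieldType := (Rdefinitions.R)[i].

Definition laurent := {c : int -> C | exists m : int, forall k : int, k < m -> c k = 0}.

Definition coef (f : laurent) : int -> C := proj1_sig f.

Definition lbd (f : laurent) : int :=
  proj1_sig (constructive_indefinite_description _ (proj2_sig f)).

Lemma lbdP (f : laurent) k : k < lbd f -> coef f k = 0.
Proof.
rewrite /lbd /coef.
by case: (constructive_indefinite_description _ _) => m Hm /= /Hm.
Qed.

Definition mkL (c : int -> C) (m : int) (H : forall k, k < m -> c k = 0) : laurent :=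
  exist _ c (ex_intro _ m H).

Definition lconst (a : C) : laurent.
Proof.
refine (@mkL (fun k => if k == 0 then a else 0) 0 _).
by move=> k Hk; rewrite (negbTE (ltr0_neq0 Hk)).
Defined.

Definition ladd (f g : laurent) : laurent.
Proof.
refine (@mkL (fun k => coef f k + coef g k) (Order.min (lbd f) (lbd g)) _).
move=> k; rewrite lt_min => /andP[Hf Hg].
by rewrite !lbdP // addr0.
Defined.

Definition lopp (f : laurent) : laurent.
Proof.
refine (@mkL (fun k => - coef f k) (lbd f) _).
by move=> k Hk; rewrite lbdP // oppr0.
Defined.

Definition lmul (f g : laurent) : laurent.
Proof.
refine (@mkL (fun k => if lbd f + lbd g <= k then
   \sum_(j < (absz (k - (lbd f + lbd g))%R).+1)
        coef f (lbd f + j%:Z) * coef g (k - lbd f - j%:Z) else 0)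
   (lbd f + lbd g) _).
by move=> k Hk; rewrite leNgt Hk.
Defined.

Definition lxmul (j : int) (f : laurent) : laurent.
Proof.
refine (@mkL (fun k => coef f (k - j)) (lbd f + j) _).
by move=> k Hk; rewrite lbdP // ltrBlDr.
Defined.

(* sigma_q f (x) = f (q x): the coefficient of x^k is multiplied by q^k *)
Definition lsigma (q : C) (f : laurent) : laurent.
Proof.
refine (@mkL (fun k => q ^ k * coef f k) (lbd f) _).
by move=> k Hk; rewrite lbdP // mulr0.
Defined.

Definition lzero : laurent := lconst 0.
Definition lone : laurent := lconst 1.

Definition lexp (f : laurent) (n : nat) : laurent := iter n (lmul f) lone.

(* multiplicative inverse in the field of Laurent series (1/f);
   for f = 0 it is an arbitrary (irrelevant) series *)
Definition linv (f : laurent) : laurent :=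
  epsilon (inhabits lzero) (fun g => lmul f g = lone).

Definition lsum (s : seq laurent) : laurent := foldr ladd lzero s.

Definition mxsigma (q : C) (h : laurent) : laurent := lopp (lxmul 1 (lsigma q h)).

(* P_m = sum_{k=0}^{m-1} (-x sigma_q)^k P   (so P_0 = 0, P_1 = P) *)
Definition Pseq (q : C) (P : laurent) (m : nat) : laurent :=
  lsum [seq iter k (mxsigma q) P | k <- iota 0 m].

(* j-th factor (j = 1..n) of L_{n,n}^P :  h |-> (1/P_{n+1-j}) (x^j sigma_q - (-1)^j) h *)
Definition Lfactor (q : C) (P : laurent) (n j : nat) (h : laurent) : laurent :=
  lmul (linv (Pseq q P (n.+1 - j)))
       (ladd (lxmul j%:Z (lsigma q h)) (lopp (lmul (lconst ((-1) ^+ j)) h))).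

(* L_{n,n}^P = (1/P_n)(x sigma_q - (-1)^1)(1/P_{n-1})(x^2 sigma_q - (-1)^2) ... (1/P_1)(x^n sigma_q - (-1)^n),
   factor j = 1 outermost, j = n applied first *)
Definition LnnP (q : C) (P : laurent) (n : nat) (g : laurent) : laurent :=
  foldr (fun j h => Lfactor q P n j h) g (iota 1 n).

From HB Require Import structures.
From mathcomp Require Import all_boot all_order all_algebra complex.
From mathcomp Require Import zify.
From Stdlib Require Import Ring Permutation Classical ProofIrrelevance.
From Stdlib Require Import FunctionalExtensionality ClassicalEpsilon.
Import Order.TTheory GRing.Theory Num.Theory.
Local Open Scope ring_scope.

(* Put  w_m = P_m - f.  Since  P_{m+1} = P - x sigma_q P_m  and
   x sigma_q f = P - f,  the operator  Phi_1 = x sigma_q  maps  w_m  to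
   -w_{m+1}.  Let  h_j(A)  be the complete homogeneous symmetric polynomial
   of degree j in the series of the list A.  Being homogeneous of degree j,
   h_j  satisfies  Phi_j (h_j(A)) = h_j(Phi_1 A),  and the classical identity
   h_{j+1}(A,b) - h_{j+1}(a,A) = (b - a) h_j(a,A,b)  then gives, with
   w_{k+1} - w_0 = P_{k+1},
      (1/P_{k+1}) (x^{j+1} sigma_q - (-1)^{j+1}) h_{j+1}(w_0..w_k)
          = (-1)^{j+1} h_j(w_0..w_{k+1}).
   Starting from  f^n = (-1)^n h_n(w_0)  and applying the n factors of
   L_{n,n}^P one by one, we reach  (-1)^e h_0(w_0..w_n) = (-1)^e  with
   e = n + n(n+1)/2,  which has the parity of  n(n-1)/2. *)

Lemma laurent_ext (f g : laurent) : (forall k, coef f k = coef g k) -> f = g.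
Proof.
case: f g => [cf Hf] [cg Hg] /= H.
have E : cf = cg by apply: functional_extensionality.
by subst cg; rewrite (proof_irrelevance _ Hf Hg).
Qed.

Definition vanish_below (a : int) (f : laurent) := forall k, k < a -> coef f k = 0.

Lemma vanish_below_lbd f : vanish_below (lbd f) f.
Proof. by move=> k; apply: lbdP. Qed.

Lemma laurent_ext_from (c : int) (X Y : laurent) : vanish_below c X -> vanish_below c Y ->
  (forall m : nat, coef X (c + m%:Z) = coef Y (c + m%:Z)) -> X = Y.
Proof.
move=> HX HY H; apply: laurent_ext => k.
case: (ltrP k c) => Hk; first by rewrite HX // HY.
have -> : k = c + (absz (k - c)%R)%:Z by lia.
exact: H.
Qed.

Lemma coef_ladd f g k : coef (ladd f g) k = coef f k + coef g k. Proof. by []. Qed.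
Lemma coef_lopp f k : coef (lopp f) k = - coef f k. Proof. by []. Qed.
Lemma coef_lconst c k : coef (lconst c) k = if k == 0 then c else 0. Proof. by []. Qed.

Lemma coef_lzero k : coef lzero k = 0.
Proof. by rewrite coef_lconst if_same. Qed.

Lemma vanish_below_add {f g : laurent} {a : int} :
  vanish_below a f -> vanish_below a g -> vanish_below a (ladd f g).
Proof. by move=> Ha Hb k Hk; rewrite coef_ladd Ha // Hb // addr0. Qed.

Lemma vanish_below_const c : vanish_below 0 (lconst c).
Proof. by move=> k Hk; rewrite coef_lconst (negbTE (ltr0_neq0 Hk)). Qed.

Definition cauchy_coef (f g : laurent) (a b k : int) : C :=
  if a + b <= k then
    \sum_(j < (absz (k - (a + b))%R).+1) coef f (a + j%:Z) * coef g (k - a - j%:Z)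
  else 0.

Lemma cauchy_coef_lowerl (f g : laurent) (a b k : int) :
  vanish_below a f -> cauchy_coef f g (a - 1) b k = cauchy_coef f g a b k.
Proof.
move=> Hf; rewrite /cauchy_coef.
case: (lerP (a + b) k) => H1.
  have -> : a - 1 + b <= k by lia.
  have -> : absz (k - (a - 1 + b))%R = (absz (k - (a + b))%R).+1 by lia.
  rewrite big_ord_recl Hf; last by rewrite /=; lia.
  rewrite mul0r add0r; apply: eq_bigr => j _; rewrite lift0.
  congr (coef f _ * coef g _); lia.
case: (lerP (a - 1 + b) k) => H2 //.
have -> : absz (k - (a - 1 + b))%R = 0%N by lia.
by rewrite big_ord1 /= Hf ?mul0r //; lia.
Qed.

Lemma cauchy_coef_lowerr (f g : laurent) (a b k : int) :
  vanish_below b g -> cauchy_coef f g a (b - 1) k = cauchy_coef f g a b k.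
Proof.
move=> Hg; rewrite /cauchy_coef.
case: (lerP (a + b) k) => H1.
  have -> : a + (b - 1) <= k by lia.
  have -> : absz (k - (a + (b - 1)))%R = (absz (k - (a + b))%R).+1 by lia.
  by rewrite big_ord_recr /= [X in _ * X]Hg ?mulr0 ?addr0 //; lia.
case: (lerP (a + (b - 1)) k) => H2 //.
have -> : absz (k - (a + (b - 1)))%R = 0%N by lia.
by rewrite big_ord1 /= Hg ?mulr0 //; lia.
Qed.

Lemma cauchy_coef_lower (f g : laurent) (a b k : int) (d e : nat) :
  vanish_below a f -> vanish_below b g ->
  cauchy_coef f g (a - d%:Z) (b - e%:Z) k = cauchy_coef f g a b k.
Proof.
move=> Hf Hg.
have Hl b' : cauchy_coef f g (a - d%:Z) b' k = cauchy_coef f g a b' k.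
  elim: d => [|d IH]; first by rewrite subr0.
  rewrite -IH -(@cauchy_coef_lowerl f g (a - d%:Z)); last by move=> i Hi; apply: Hf; lia.
  congr cauchy_coef; lia.
rewrite Hl; elim: e => [|e IH]; first by rewrite subr0.
rewrite -IH -(@cauchy_coef_lowerr f g a (b - e%:Z)); last by move=> i Hi; apply: Hg; lia.
congr cauchy_coef; lia.
Qed.

Lemma coef_lmul_from {f g : laurent} {a b : int} (k : int) :
  vanish_below a f -> vanish_below b g -> coef (lmul f g) k = cauchy_coef f g a b k.
Proof.
move=> Ha Hb; have Ha' := vanish_below_lbd f; have Hb' := vanish_below_lbd g.
pose c := Order.min a (lbd f); pose d := Order.min b (lbd g).
change (coef (lmul f g) k) with (cauchy_coef f g (lbd f) (lbd g) k).
rewrite -(@cauchy_coef_lower f g _ _ k (absz (lbd f - c)) (absz (lbd g - d))) //.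
rewrite -(@cauchy_coef_lower f g a b k (absz (a - c)) (absz (b - d))) //.
congr cauchy_coef; rewrite /c /d; lia.
Qed.

Lemma coef_lmul_sum {f g : laurent} {a b : int} (m : nat) :
  vanish_below a f -> vanish_below b g ->
  coef (lmul f g) (a + b + m%:Z) =
  \sum_(j < m.+1) coef f (a + j%:Z) * coef g (b + (m - j)%:Z).
Proof.
move=> Ha Hb; rewrite (coef_lmul_from _ Ha Hb) /cauchy_coef.
have -> : a + b <= a + b + m%:Z by lia.
have -> : absz (a + b + m%:Z - (a + b))%R = m by lia.
apply: eq_bigr => j _; congr (_ * coef g _); have := ltn_ord j; lia.
Qed.

Lemma vanish_below_mul {f g : laurent} {a b : int} :
  vanish_below a f -> vanish_below b g -> vanish_below (a + b) (lmul f g).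
Proof.
by move=> Ha Hb k Hk; rewrite (coef_lmul_from _ Ha Hb) /cauchy_coef leNgt Hk.
Qed.

(* The first N coefficients of f from index a on, as a polynomial: the ring
   axioms for series are transported from those of polynomials. *)
Definition trunc (f : laurent) (a : int) (N : nat) : {poly C} :=
  \poly_(i < N) coef f (a + i%:Z).

Lemma coef_trunc f a N i : (i < N)%N -> (trunc f a N)`_i = coef f (a + i%:Z).
Proof. by move=> H; rewrite coef_poly H. Qed.

Lemma coef_lmul_trunc {f g : laurent} {a b : int} (N : nat) :
  vanish_below a f -> vanish_below b g -> forall m : nat, (m < N)%N ->
  coef (lmul f g) (a + b + m%:Z) = (trunc f a N * trunc g b N)`_m.
Proof.
move=> Ha Hb m HN; rewrite (coef_lmul_sum _ Ha Hb) coefM; apply: eq_bigr => j _.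
have Hj := ltn_ord j.
by rewrite !coef_trunc //; apply: leq_ltn_trans HN; rewrite ?leq_subr // -ltnS.
Qed.

Lemma coefMr_ext (p r r' : {poly C}) m :
  (forall i, (i <= m)%N -> r`_i = r'`_i) -> (p * r)`_m = (p * r')`_m.
Proof. by move=> H; rewrite !coefM; apply: eq_bigr => j _; rewrite H // leq_subr. Qed.

Lemma lmulC (f g : laurent) : lmul f g = lmul g f.
Proof.
have Ha := vanish_below_lbd f; have Hb := vanish_below_lbd g.
apply: (@laurent_ext_from (lbd f + lbd g)); first exact: vanish_below_mul.
  by rewrite addrC; exact: vanish_below_mul.
move=> m; rewrite (coef_lmul_trunc m.+1 Ha Hb) // (addrC (lbd f)).
by rewrite (coef_lmul_trunc m.+1 Hb Ha) // mulrC.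
Qed.

Lemma lmulA (f g h : laurent) : lmul f (lmul g h) = lmul (lmul f g) h.
Proof.
set a := lbd f; set b := lbd g; set c := lbd h.
have Ha := vanish_below_lbd f; have Hb := vanish_below_lbd g.
have Hc := vanish_below_lbd h.
have Hgh := vanish_below_mul Hb Hc; have Hfg := vanish_below_mul Ha Hb.
apply: (@laurent_ext_from (a + b + c)); last move=> m.
- by rewrite -addrA; exact: vanish_below_mul.
- exact: vanish_below_mul.
rewrite (coef_lmul_trunc m.+1 Hfg Hc) // -(addrA a b c).
rewrite (coef_lmul_trunc m.+1 Ha Hgh) //.
rewrite (@coefMr_ext _ _ (trunc g b m.+1 * trunc h c m.+1)); last first.
  by move=> i Hi; rewrite coef_trunc // (coef_lmul_trunc m.+1 Hb Hc).
rewrite [in RHS]mulrC (@coefMr_ext (trunc h c m.+1) _ (trunc f a m.+1 * trunc g b m.+1)); last first.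
  by move=> i Hi; rewrite coef_trunc // (coef_lmul_trunc m.+1 Ha Hb).
by rewrite [in RHS]mulrC mulrA.
Qed.

Lemma lmulDl (f g h : laurent) : lmul (ladd f g) h = ladd (lmul f h) (lmul g h).
Proof.
set a := Order.min (lbd f) (lbd g).
have Ha : vanish_below a f by move=> k Hk; apply: lbdP; rewrite /a in Hk; lia.
have Hb : vanish_below a g by move=> k Hk; apply: lbdP; rewrite /a in Hk; lia.
have Hc := vanish_below_lbd h; have Hab := vanish_below_add Ha Hb.
apply: (@laurent_ext_from (a + lbd h)); last move=> m.
- exact: vanish_below_mul Hab Hc.
- by apply: vanish_below_add; exact: vanish_below_mul.
rewrite (coef_lmul_trunc m.+1 Hab Hc) // coef_ladd.
rewrite (coef_lmul_trunc m.+1 Ha Hc) // (coef_lmul_trunc m.+1 Hb Hc) //.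
have -> : trunc (ladd f g) a m.+1 = trunc f a m.+1 + trunc g a m.+1.
  by apply/polyP => i; rewrite coefD !coef_poly; case: ifP; rewrite ?addr0.
by rewrite mulrDl coefD.
Qed.

Lemma lmul1 (f : laurent) : lmul lone f = f.
Proof.
have H1 := vanish_below_const 1; have Ha := vanish_below_lbd f.
apply: (@laurent_ext_from (0 + lbd f)); first exact: vanish_below_mul H1 Ha.
  by rewrite add0r.
move=> m; rewrite (coef_lmul_trunc m.+1 H1 Ha) //.
have -> : trunc lone 0 m.+1 = 1.
  apply/polyP => i; rewrite coef_poly coef1 coef_lconst add0r.
  by case: ifP; case: i.
by rewrite mul1r coef_trunc // add0r.
Qed.

Definition lsub (f g : laurent) := ladd f (lopp g).

Lemma lring : ring_theory lzero lone ladd lmul lsub lopp eq.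
Proof.
constructor=> //.
- by move=> f; apply: laurent_ext => k; rewrite coef_ladd coef_lzero add0r.
- by move=> f g; apply: laurent_ext => k; rewrite !coef_ladd addrC.
- by move=> f g h; apply: laurent_ext => k; rewrite !coef_ladd addrA.
- exact: lmul1.
- exact: lmulC.
- exact: lmulA.
- exact: lmulDl.
- by move=> f; apply: laurent_ext => k; rewrite coef_ladd coef_lopp coef_lzero subrr.
Qed.

Add Ring lring : lring.

Lemma coef_cmul c (g : laurent) k : coef (lmul (lconst c) g) k = c * coef g k.
Proof.
have Hb := vanish_below_lbd g; have Hc := vanish_below_const c.
case: (ltrP k (0 + lbd g)) => Hk.
  by rewrite (vanish_below_mul Hc Hb) // Hb ?mulr0 //; lia.
have -> : k = 0 + lbd g + (absz (k - lbd g)%R)%:Z by lia.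
rewrite (coef_lmul_sum _ Hc Hb) big_ord_recl big1 ?addr0.
  by rewrite coef_lconst /= subn0 add0r.
move=> i _; rewrite coef_lconst lift0; case: eqP => H; last by rewrite mul0r.
lia.
Qed.

Lemma lconstM c d : lconst (c * d) = lmul (lconst c) (lconst d).
Proof.
by apply: laurent_ext => k; rewrite coef_cmul !coef_lconst; case: ifP; rewrite ?mulr0.
Qed.

Lemma lconst1 : lconst 1 = lone.
Proof. by []. Qed.

Lemma lconstN c : lconst (- c) = lopp (lconst c).
Proof.
by apply: laurent_ext => k; rewrite coef_lopp !coef_lconst; case: ifP; rewrite ?oppr0.
Qed.

Definition Phi (q : C) (j : int) (g : laurent) := lxmul j (lsigma q g).

Lemma coef_Phi q j g k : coef (Phi q j g) k = q ^ (k - j) * coef g (k - j).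
Proof. by []. Qed.

Lemma Phi_add q j f g : Phi q j (ladd f g) = ladd (Phi q j f) (Phi q j g).
Proof. by apply: laurent_ext => k; rewrite !(coef_Phi, coef_ladd) mulrDr. Qed.

Lemma Phi_opp q j f : Phi q j (lopp f) = lopp (Phi q j f).
Proof. by apply: laurent_ext => k; rewrite !(coef_Phi, coef_lopp) mulrN. Qed.

Lemma Phi_zero q j : Phi q j lzero = lzero.
Proof. by apply: laurent_ext => k; rewrite coef_Phi !coef_lzero mulr0. Qed.

Lemma Phi0_const q c : Phi q 0 (lconst c) = lconst c.
Proof.
apply: laurent_ext => k; rewrite coef_Phi subr0 !coef_lconst.
by case: ifP => [/eqP -> | _]; rewrite ?expr0z ?mul1r ?mulr0.
Qed.

Lemma vanish_below_Phi (q : C) (j : int) {a : int} {g : laurent} :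
  vanish_below a g -> vanish_below (a + j) (Phi q j g).
Proof. by move=> H k Hk; rewrite coef_Phi H ?mulr0 //; lia. Qed.

(* Phi_{i+j}(fg) = Phi_i(f) Phi_j(g): sigma_q is a ring morphism (q != 0). *)
Lemma Phi_mul (q : C) (i j : int) (f g : laurent) : q != 0 ->
  Phi q (i + j) (lmul f g) = lmul (Phi q i f) (Phi q j g).
Proof.
move=> Hq; have Ha := vanish_below_lbd f; have Hb := vanish_below_lbd g.
set a := lbd f in Ha *; set b := lbd g in Hb *.
have Ha' := vanish_below_Phi q i Ha; have Hb' := vanish_below_Phi q j Hb.
apply: (@laurent_ext_from (a + i + (b + j))); last move=> m.
- have -> : a + i + (b + j) = a + b + (i + j) by lia.
  by apply: vanish_below_Phi; exact: vanish_below_mul.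
- exact: vanish_below_mul.
rewrite (coef_lmul_sum _ Ha' Hb') coef_Phi.
have -> : a + i + (b + j) + m%:Z - (i + j) = a + b + m%:Z by lia.
rewrite (coef_lmul_sum _ Ha Hb) big_distrr; apply: eq_bigr => l _ /=.
have -> : a + i + l%:Z - i = a + l%:Z by lia.
have -> : b + j + (m - l)%:Z - j = b + (m - l)%:Z by lia.
have -> : a + b + m%:Z = (a + l%:Z) + (b + (m - l)%:Z) by have := ltn_ord l; lia.
by rewrite expfzDr // mulrACA.
Qed.

Lemma Phi_cmul (q : C) (j : int) c g : q != 0 ->
  Phi q j (lmul (lconst c) g) = lmul (lconst c) (Phi q j g).
Proof. by move=> Hq; rewrite -{1}(add0r j) Phi_mul // Phi0_const. Qed.

Lemma mxsigmaE q h : mxsigma q h = lopp (Phi q 1 h).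
Proof. by []. Qed.

Lemma mxsigma_add q f g : mxsigma q (ladd f g) = ladd (mxsigma q f) (mxsigma q g).
Proof. rewrite !mxsigmaE Phi_add; ring. Qed.

Lemma Pseq0 q P : Pseq q P 0 = lzero.
Proof. by []. Qed.

Lemma PseqS q P m : Pseq q P m.+1 = ladd P (mxsigma q (Pseq q P m)).
Proof.
rewrite /Pseq /=; congr ladd; elim: m 0%N => [|m IH] s /=.
  by rewrite mxsigmaE Phi_zero; ring.
by rewrite IH mxsigma_add.
Qed.

Lemma exists_lowest {f : laurent} : f <> lzero ->
  exists v, coef f v != 0 /\ vanish_below v f.
Proof.
move=> Hf.
have [k Hk] : exists k, coef f k != 0.
  apply: NNPP => H; apply: Hf; apply: laurent_ext => k; rewrite coef_lzero.
  by case: (eqVneq (coef f k) 0) => // Hk; case: H; exists k.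
have exP : exists m : nat, coef f (lbd f + m%:Z) != 0.
  exists (absz (k - lbd f)%R).
  case: (ltrP k (lbd f)) => H; first by rewrite lbdP ?eqxx in Hk.
  by have -> : lbd f + (absz (k - lbd f)%R)%:Z = k by lia.
case: (ex_minnP exP) => m Hm Hmin.
exists (lbd f + m%:Z); split => // k' Hk'.
case: (ltrP k' (lbd f)) => H; first exact: lbdP.
case: (eqVneq (coef f k') 0) => // Hn.
have E : k' = lbd f + (absz (k' - lbd f)%R)%:Z by lia.
by move: Hn; rewrite {1}E => /Hmin; lia.
Qed.

(* P_{m+1} has the same lowest coefficient as P: the terms
   (-x sigma_q)^k P, k >= 1, start at strictly higher order. *)
Lemma Pseq_neq0 q P m : P <> lzero -> Pseq q P m.+1 <> lzero.
Proof.
move=> HP; case: (exists_lowest HP) => v [Hv Hval].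
have Hx h : vanish_below v h -> coef (mxsigma q h) v = 0.
  by move=> Hh; rewrite mxsigmaE coef_lopp (vanish_below_Phi q 1 Hh) ?oppr0 //; lia.
have Hm k : vanish_below v (Pseq q P k).
  elim: k => [|k IH] i Hi; first by rewrite coef_lzero.
  rewrite PseqS coef_ladd mxsigmaE coef_lopp Hval //.
  by rewrite (vanish_below_Phi q 1 IH) ?oppr0 ?addr0 //; lia.
rewrite PseqS => H.
have : coef (ladd P (mxsigma q (Pseq q P m))) v = 0 by rewrite H coef_lzero.
by rewrite coef_ladd Hx // addr0 => E; rewrite E eqxx in Hv.
Qed.

(* If u is the coefficient sequence of Q from its lowest
   coefficient u_0 != 0, the inverse coefficients are
   b_0 = 1/u_0,  b_m = -(1/u_0) sum_{i<m} u_{i+1} b_{m-1-i};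
   [inv_coef_fuel] computes them by recursion on a fuel argument. *)
Fixpoint inv_coef_fuel (u : nat -> C) (fuel m : nat) : C :=
  match fuel with
  | 0 => 0
  | fuel'.+1 => if m is 0 then (u 0%N)^-1
      else - (u 0%N)^-1 * \sum_(i < m) u i.+1 * inv_coef_fuel u fuel' (m - i.+1)
  end.

Lemma inv_coef_fuel_irr u fu1 fu2 m : (m < fu1)%N -> (m < fu2)%N ->
  inv_coef_fuel u fu1 m = inv_coef_fuel u fu2 m.
Proof.
elim: fu1 fu2 m => [|a IH] [|b] [|m] //= H1 H2.
by apply: congr1; apply: eq_bigr => i _; apply: congr1; apply: IH; lia.
Qed.

Definition inv_coef u m := inv_coef_fuel u m.+1 m.

Lemma inv_coefS u m : inv_coef u m.+1 =
  - (u 0%N)^-1 * \sum_(i < m.+1) u i.+1 * inv_coef u (m.+1 - i.+1).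
Proof.
change (inv_coef u m.+1) with
  (- (u 0%N)^-1 * \sum_(i < m.+1) u i.+1 * inv_coef_fuel u m.+1 (m.+1 - i.+1)).
by apply: congr1; apply: eq_bigr => i _; apply: congr1; apply: inv_coef_fuel_irr; lia.
Qed.

Definition inv_series (u : nat -> C) (v : int) : laurent.
Proof.
refine (@mkL (fun k => if - v <= k then inv_coef u (absz (k + v)) else 0) (- v) _).
by move=> k Hk; rewrite leNgt Hk.
Defined.

Lemma inv_exists (Q : laurent) : Q <> lzero -> exists g, lmul Q g = lone.
Proof.
move=> HQ; case: (exists_lowest HQ) => v [Hv Hval].
pose u i := coef Q (v + i%:Z).
have Hu0 : u 0%N != 0 by rewrite /u addr0.
have Hg : vanish_below (- v) (inv_series u v) by move=> k Hk; rewrite /coef /= leNgt Hk.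
have cg (l : nat) : coef (inv_series u v) (- v + l%:Z) = inv_coef u l.
  rewrite /coef /=; have -> : - v <= - v + l%:Z by lia.
  by congr inv_coef; lia.
exists (inv_series u v).
apply: (@laurent_ext_from (v + - v)); first exact: vanish_below_mul.
  by rewrite subrr; exact: vanish_below_const.
move=> m; rewrite (coef_lmul_sum _ Hval Hg) coef_lconst subrr add0r.
under eq_bigr => l _ do rewrite cg.
case: m => [|m]; first by rewrite big_ord1 /= mulfV.
rewrite big_ord_recl /= subn0 inv_coefS.
by rewrite -/(u 0%N) -/(u _) mulrA mulrN mulfV // mulN1r addNr.
Qed.

Lemma linvK (Q X : laurent) : Q <> lzero -> lmul (linv Q) (lmul Q X) = X.
Proof.
move=> HQ; have H : lmul Q (linv Q) = lone.
  rewrite /linv; apply: (epsilon_spec (inhabits lzero) (fun g => lmul Q g = lone)).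
  exact: inv_exists.
by rewrite lmulA (lmulC _ Q) H; ring.
Qed.

(* Complete homogeneous symmetric polynomials.  [hsa a F] is the sequence
   j |-> sum_{i<=j} a^i F_{j-i}, i.e. the product of (1 - a t)^{-1} with the
   generating series of F, and [hs A j] = h_j(A). *)
Fixpoint hsa (a : laurent) (F : nat -> laurent) (j : nat) : laurent :=
  if j is j'.+1 then ladd (lmul a (hsa a F j')) (F j) else F 0%N.

Fixpoint hs (A : seq laurent) : nat -> laurent :=
  if A is a :: A' then hsa a (hs A')
  else fun j => if j is 0 then lone else lzero.

Lemma hsaS a F j : hsa a F j.+1 = ladd (lmul a (hsa a F j)) (F j.+1).
Proof. by []. Qed.

Lemma hs0 A : hs A 0 = lone.
Proof. by elim: A. Qed.

Lemma hs_singleton a n : hs [:: a] n = lexp a n.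
Proof.
elim: n => [|n IH] //=; rewrite -/(hs [:: a] n) IH.
by rewrite -/(lexp a n.+1) /=; ring.
Qed.

Lemma hsa_ext a F G j : (forall i, F i = G i) -> hsa a F j = hsa a G j.
Proof. by move=> H; elim: j => [|j IH] /=; rewrite ?IH H. Qed.

Lemma hsa_swap a b F j : hsa a (hsa b F) j = hsa b (hsa a F) j.
Proof.
have Hrec i : hsa a (hsa b F) i.+1 = ladd (lmul b (hsa a (hsa b F) i)) (hsa a F i.+1).
  elim: i => [|i IH]; first by rewrite /=; ring.
  rewrite (hsaS a (hsa b F) i.+1) (hsaS b F i.+1) (hsaS a F i.+1).
  by rewrite [in LHS]IH [in RHS](hsaS a (hsa b F) i); ring.
by elim: j => [|j IH] //; rewrite Hrec /= IH.
Qed.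

Lemma hs_perm {A B : seq laurent} : Permutation A B -> forall j, hs A j = hs B j.
Proof.
elim=> [|x l l' _ IH|x y l|l l' l'' _ IH1 _ IH2] j //=.
- exact: hsa_ext.
- exact: hsa_swap.
- by rewrite IH1 IH2.
Qed.

Lemma hsa_sub a b F j :
  lsub (hsa a F j.+1) (hsa b F j.+1) = lmul (lsub a b) (hsa a (hsa b F) j).
Proof.
elim: j => [|j IH]; first by rewrite /=; ring.
rewrite (hsaS a F j.+1) (hsaS b F j.+1) (hsaS a (hsa b F) j).
have -> : hsa a F j.+1 = ladd (hsa b F j.+1) (lmul (lsub a b) (hsa a (hsa b F) j)).
  by rewrite -IH; ring.
ring.
Qed.

Lemma hs_rcons_sub a b A j :
  lsub (hs (rcons A b) j.+1) (hs (a :: A) j.+1) = lmul (lsub b a) (hs (a :: rcons A b) j).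
Proof.
have Hperm : Permutation (b :: A) (rcons A b).
  by rewrite -cats1; exact: Permutation_cons_append.
rewrite -(hs_perm Hperm) /= hsa_sub; congr lmul.
rewrite -/(hs (b :: a :: A) j) -/(hs (a :: rcons A b) j); apply: hs_perm.
exact: perm_trans (perm_swap _ _ _) (perm_skip _ Hperm).
Qed.

(* h_j is homogeneous of degree j. *)
Lemma Phi_hs (q : C) A j : q != 0 -> Phi q j%:Z (hs A j) = hs (map (Phi q 1) A) j.
Proof.
move=> Hq; elim: A j => [|a A IH] j /=.
  by case: j => [|j]; rewrite ?Phi0_const ?Phi_zero.
elim: j => [|j IHj] /=; first exact: IH.
by rewrite Phi_add IH -IHj -Phi_mul.
Qed.

Lemma hs_opp A j : hs (map lopp A) j = lmul (lconst ((-1) ^+ j)) (hs A j).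
Proof.
elim: A j => [|a A IH] j /=.
  by case: j => [|j]; rewrite ?expr0 ?lconst1; ring.
elim: j => [|j IHj] /=; first by rewrite IH expr0 lconst1; ring.
by rewrite IHj IH exprS lconstM lconstN lconst1; ring.
Qed.

(* Exponent of the sign after the last k factors of L_{n,n}^P:
   n + n + (n-1) + ... + (n-k+1);  for k = n it has the parity of n(n-1)/2. *)
Fixpoint sign_exp (n k : nat) : nat :=
  if k is k'.+1 then (sign_exp n k' + (n - k'))%N else n.

Lemma sign_exp_n n : (1 <= n)%N -> sign_exp n n = ((n * n.-1) %/ 2 + 2 * n)%N.
Proof.
move=> Hn; have : (n * n.-1 + n = n * n)%N by case: n Hn => [|m] //= _; nia.
have Hclosed k : (k <= n)%N -> (2 * sign_exp n k + k * k.-1 = 2 * n + 2 * k * n)%N.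
  by elim: k => [|k IH] Hk /=; [lia | have := IH (ltnW Hk); nia].
by have := Hclosed n (leqnn n); lia.
Qed.

Lemma iota_rcons s k : iota s k.+1 = rcons (iota s k) (s + k).
Proof. by rewrite -addn1 iotaD cats1. Qed.

Section MainIdentity.

Variables (q : C) (P f : laurent) (n : nat).
Hypotheses (q_neq0 : q != 0) (P_neq0 : P <> lzero).
Hypothesis f_eq : ladd (lxmul 1 (lsigma q f)) f = P.

Let w (m : nat) := lsub (Pseq q P m) f.
Let ws (k : nat) := [seq w m | m <- iota 0 k.+1].

Lemma Phi_w m : Phi q 1 (w m) = lopp (w m.+1).
Proof.
have E : Phi q 1 f = lsub P f by rewrite -f_eq /Phi; ring.
by rewrite /w /lsub Phi_add Phi_opp E PseqS mxsigmaE; ring.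
Qed.

Lemma Lfactor_hs k j : (n.+1 - j.+1 = k.+1)%N ->
  Lfactor q P n j.+1 (hs (ws k) j.+1) = lmul (lconst ((-1) ^+ j.+1)) (hs (ws k.+1) j).
Proof.
move=> Hnk; rewrite /Lfactor Hnk.
set A := [seq w m | m <- iota 1 k].
have HA : [seq w m | m <- iota 1 k.+1] = rcons A (w k.+1).
  by rewrite iota_rcons map_rcons.
have Hws : ws k = w 0 :: A by [].
have Hws1 : ws k.+1 = w 0 :: rcons A (w k.+1) by rewrite -HA.
have Hshift : map (Phi q 1) (ws k) = map lopp (rcons A (w k.+1)).
  rewrite -HA (_ : iota 1 k.+1 = map (addn 1) (iota 0 k.+1)); last by rewrite -iotaDl.
  by rewrite /ws -!map_comp; apply: eq_map => m /=; rewrite Phi_w.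
have HPk : lsub (w k.+1) (w 0) = Pseq q P k.+1.
  by rewrite /w Pseq0; ring.
change (lxmul j.+1%:Z (lsigma q ?h)) with (Phi q j.+1%:Z h).
rewrite Phi_hs // Hshift hs_opp.
set s := lconst ((-1) ^+ j.+1).
have -> : ladd (lmul s (hs (rcons A (w k.+1)) j.+1)) (lopp (lmul s (hs (ws k) j.+1))) =
          lmul (Pseq q P k.+1) (lmul s (hs (ws k.+1) j)).
  rewrite Hws Hws1 -HPk.
  transitivity (lmul s (lsub (hs (rcons A (w k.+1)) j.+1) (hs (w 0 :: A) j.+1))).
    by rewrite /lsub; ring.
  by rewrite hs_rcons_sub; ring.
exact/linvK/Pseq_neq0.
Qed.

Lemma Lfactor_cmul j c h :
  Lfactor q P n j (lmul (lconst c) h) = lmul (lconst c) (Lfactor q P n j h).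
Proof.
rewrite /Lfactor; change (lxmul j%:Z (lsigma q ?g)) with (Phi q j%:Z g).
by rewrite Phi_cmul //; ring.
Qed.

Let tail (k : nat) := foldr (fun j h => Lfactor q P n j h) (lexp f n) (iota (n - k).+1 k).

Lemma tail_hs k : (k <= n)%N ->
  tail k = lmul (lconst ((-1) ^+ sign_exp n k)) (hs (ws k) (n - k)).
Proof.
elim: k => [|k IH] Hk.
  have -> : ws 0 = map lopp [:: f] by rewrite /ws /= /w Pseq0 /lsub; congr [:: _]; ring.
  change (tail 0) with (lexp f n); rewrite subn0 hs_opp hs_singleton.
  by rewrite lmulA -lconstM -exprMn mulrNN mulr1 expr1n lconst1; ring.
have E1 : (n - k.+1).+1 = (n - k)%N by lia.
have -> : tail k.+1 = Lfactor q P n (n - k) (tail k).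
  by rewrite /tail E1.
rewrite IH ?(ltnW Hk) // Lfactor_cmul -E1 Lfactor_hs; last by lia.
by rewrite lmulA -lconstM -exprD E1.
Qed.

End MainIdentity.

Theorem theorem1 (q : C) (n : nat) (P f : laurent) :
  q != 0 -> (1 <= n)%N -> P <> lzero ->
  ladd (lxmul 1 (lsigma q f)) f = P ->
  LnnP q P n (lexp f n) = lconst ((-1) ^+ ((n * n.-1) %/ 2)).
Proof.
move=> Hq Hn HP Hf.
have := @tail_hs q P f n Hq HP Hf n (leqnn n).
rewrite subnn hs0 (sign_exp_n n Hn) exprD exprM sqrrN !expr1n mulr1 => Htail.
by rewrite /LnnP Htail; ring.
Qed.
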